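(* Every locally Ramsey topological space is $\alpha_{3^-}$, and every $\alpha_{3^-}$ topological space is $\alpha_3$.
   Context: Convention: a ''sequence'' is a countably infinite set; a countably infinite set $A$ in a space $X$ converges to $x\in X$ if $x\notin A$ and every neighborhood of $x$ contains all but finitely many elements of $A$. $\lim_m x_{nm}=x$ means $x_{nm}\neq x$ for all $m$ and every neighborhood of $x$ contains $x_{nm}$ for all but finitely many $m$. A space $X$ is locally Ramsey if for each $x\in X$, whenever $\lim_m x_{nm}=x$ for all $n$, there is an infinite $I\subseteq\mathbb N$ such that $\{x_{nm}: n,m\in I,\ n<m\}$ converges to $x$. $X$ is $\alpha_{3^-}$ if for each $x\in X$, whenever $\lim_m x_{nm}=x$ for all $n$, there are infinite $I,J\subseteq\mathbb N$ such that $\{x_{nm}: n\in I,\ m\in J,\ n<m\}$ converges to $x$. $X$ is $\alpha_3$ if for each $x\in X$ and all pairwise disjoint sequences $S_1,S_2,\dots\subseteq X$ each converging to $x$, there is a sequence $S\subseteq\bigcup_nS_n$ converging to $x$ such that $S_n\cap S$ is infinite for infinitely many $n$. *)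

From HB Require Import structures.
From mathcomp Require Import all_boot all_order.
From mathcomp Require Import classical_sets cardinality topology.
Set Implicit Arguments. Unset Strict Implicit. Unset Printing Implicit Defensive.
Local Open Scope classical_set_scope.

Definition is_sequence {T : Type} (A : set T) : Prop :=
  countable A /\ infinite_set A.

Definition set_converges {T : topologicalType} (A : set T) (x : T) : Prop :=
  is_sequence A /\ ~ A x /\
  (forall U : set T, nbhs x U -> finite_set (A `\` U)).

Definition lim_to {T : topologicalType} (f : nat -> T) (x : T) : Prop :=
  (forall m, f m <> x) /\
  (forall U : set T, nbhs x U -> finite_set [set m | ~ U (f m)]).

Definition locally_Ramsey (T : topologicalType) : Prop :=
  forall (x : T) (u : nat -> nat -> T),
    (forall n, lim_to (u n) x) ->
    exists I : set nat, infinite_set I /\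
      set_converges [set y | exists n m, I n /\ I m /\ (n < m)%N /\ u n m = y] x.

Definition alpha3m (T : topologicalType) : Prop :=
  forall (x : T) (u : nat -> nat -> T),
    (forall n, lim_to (u n) x) ->
    exists I J : set nat, infinite_set I /\ infinite_set J /\
      set_converges [set y | exists n m, I n /\ J m /\ (n < m)%N /\ u n m = y] x.

Definition alpha3 (T : topologicalType) : Prop :=
  forall (x : T) (S : nat -> set T),
    (forall n, set_converges (S n) x) ->
    (forall n m, n <> m -> S n `&` S m = set0) ->
    exists S0 : set T, S0 `<=` \bigcup_n S n /\ set_converges S0 x /\
      infinite_set [set n | infinite_set (S0 `&` S n)].

(* Locally Ramsey implies alpha_3^- by taking J := I.  For alpha_3, enumerate
   each S_n injectively as the n-th row u n of a double sequence; every row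
   tends to x, so alpha_3^- yields infinite I, J such that
   S := {u n m | n in I, m in J, n < m} converges to x.  For n in I the row
   contributes the infinitely many points u n m with m in J, m > n, so S meets
   S_n in an infinite set. *)

From mathcomp Require Import all_boot classical_sets cardinality topology.
From mathcomp Require Import boolp functions.
Local Open Scope classical_set_scope.

Lemma infinite_set_injective_enum (T : Type) (A : set T) : infinite_set A ->
  exists f : nat -> T, (forall n, A (f n)) /\ injective f.
Proof.
move=> /infiniteP /card_leP [f].
pose g : [set: nat] -> A := f.
pose h n : [set: nat] := SigSub (mem_set (I : setT n)).
exists (fun n => val (g (h n))); split.
- by move=> n; case: (g _) => y /= /set_mem.
- move=> n m /val_inj gnm.
  have := @inj _ _ _ f (h n) (h m) (in_setT _) (in_setT _) gnm.
  by move=> /(congr1 val).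
Qed.

Lemma infinite_set_image {T U : Type} {f : T -> U} {A : set T} :
  injective f -> infinite_set A -> infinite_set (f @` A).
Proof.
move=> f_inj; apply: contra_not => fA_fin.
apply: sub_finite_set (finite_preimage _ fA_fin) => [a Aa|]; first by exists a.
by move=> a b _ _ /f_inj.
Qed.

Lemma infinite_set_gt {J : set nat} (n : nat) : infinite_set J ->
  infinite_set [set m | J m /\ (n < m)%N].
Proof.
move=> /infinite_setD /(_ (finite_II n.+1)); apply: sub_infinite_set.
by move=> m [Jm /negP]; rewrite /= -leqNgt.
Qed.

Lemma lim_to_injective {T : topologicalType} {A : set T} {x : T}
    {f : nat -> T} :
  set_converges A x -> (forall m, A (f m)) -> injective f -> lim_to f x.
Proof.
move=> [_ [Ax A_cvg]] Af f_inj; split=> [m fmx|U Ux].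
  by apply: Ax; rewrite -fmx.
apply: sub_finite_set (finite_preimage _ (A_cvg U Ux)) => [m|].
  by split; [exact: Af|].
by move=> a b _ _ /f_inj.
Qed.

Lemma locally_Ramsey_alpha3m (T : topologicalType) :
  locally_Ramsey T -> alpha3m T.
Proof.
by move=> LR x u u_lim; have [I [I_inf u_cvg]] := LR x u u_lim; exists I, I.
Qed.

Lemma alpha3m_alpha3 (T : topologicalType) : alpha3m T -> alpha3 T.
Proof.
move=> a3m x S S_cvg _.
have /choice [u u_enum] : forall n, exists f : nat -> T,
    (forall m, S n (f m)) /\ injective f.
  by move=> n; apply: infinite_set_injective_enum; case: (S_cvg n) => -[].
have u_lim n : lim_to (u n) x.
  by case: (u_enum n) => Su u_inj; exact: lim_to_injective (S_cvg n) Su u_inj.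
have [I [J [I_inf [J_inf S0_cvg]]]] := a3m x u u_lim.
exists [set y | exists n m, I n /\ J m /\ (n < m)%N /\ u n m = y].
split; [|split=> //].
  by move=> _ [n [m [_ [_ [_ <-]]]]]; exists n => //; case: (u_enum n).
apply: (sub_infinite_set _ I_inf) => n In /=.
have [Su u_inj] := u_enum n.
have row_inf := infinite_set_image u_inj (infinite_set_gt n J_inf).
apply: sub_infinite_set row_inf => _ [m [Jm nm] <-].
by split; [exists n, m|].
Qed.

Theorem corollary2p7 (T : topologicalType) :
  (locally_Ramsey T -> alpha3m T) /\ (alpha3m T -> alpha3 T).
Proof. by split; [exact: locally_Ramsey_alpha3m | exact: alpha3m_alpha3]. Qed.
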